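(* (a) Let $q_{4,1}(1)<q_{4,1}(2)<\cdots$ be the increasing enumeration of all primes congruent to $1$ modulo $4$ (so $q_{4,1}(1)=5$, $q_{4,1}(2)=13,\dots$) and $S_{4,1}(n)=q_{4,1}(1)+\dots+q_{4,1}(n)$. Then $S_{4,1}(n)-q_{4,1}(n+1)\ge 244$ for every $n\ge 10$. (b) Let $q_{4,3}(1)<q_{4,3}(2)<\cdots$ be the increasing enumeration of all primes congruent to $3$ modulo $4$ (so $q_{4,3}(1)=3$, $q_{4,3}(2)=7,\dots$) and $S_{4,3}(n)=q_{4,3}(1)+\dots+q_{4,3}(n)$. Then $S_{4,3}(n)-q_{4,3}(n+1)\ge 112$ for every $n\ge 8$. *)

From mathcomp Require Import all_boot.

(* [is_enum_primes_mod4 r q]: q 1 < q 2 < ... is the increasing enumeration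
   (1-indexed) of all primes congruent to r modulo 4. The value q 0 is
   irrelevant. *)
Definition is_enum_primes_mod4 (r : nat) (q : nat -> nat) : Prop :=
  (forall k, 0 < k -> q k < q k.+1) /\
  (forall k, 0 < k -> prime (q k) /\ q k %% 4 = r) /\
  (forall p, prime p -> p %% 4 = r -> exists2 k, 0 < k & q k = p).

Definition Ssum (q : nat -> nat) (n : nat) : nat := \sum_(1 <= i < n.+1) q i.

(** Since [q] enumerates the primes [p = r (mod 4)] in increasing order, [Ssum q n] is the
    sum of those below [q n.+1]; so it suffices that every such prime [p] beyond the
    first few satisfies [p + c <= (sum of the smaller ones)].

    For [p <= 2^17] this is a certified computation (trial division in binary arithmetic).
    For larger [p] we run Chebyshev's argument in the residue class.  Let [N] be the
    product of the [k] in [(y, 2y]] with [k = r], and [D] that of the [k <= y] with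
    [k = -r (mod 4)].  Comparing how many multiples of each prime power [d] fall in the two
    ranges shows that [N] divides [D] times a product of primes [p <= 2y] in which only
    the [p <= sqrt (2y)] can occur more than once, and the [p > sqrt (2y)] occur only if
    [p = r].  An elementary induction gives [N / D >= 4^t / (2t+1)] for [y = 4t]; with
    Erdős' bound [prod_(p <= m) p <= 4^m] for the primes up to [t/2] this forces the
    primes [p = r] in [(t/2, 8t]] to have product [> (8t)^256].  So there are more than
    256 of them, and for [t = (p-1)/8] their sum exceeds [p + 244]. *)

From Stdlib Require Import Lia NArith.
From mathcomp Require Import all_boot all_algebra zify ring.

Set Implicit Arguments.
Unset Strict Implicit.
Unset Printing Implicit Defensive.

(** * Reduction to a property of single primes *)

Definition prime_mod4 (r : nat) : pred nat := fun p => prime p && (p %% 4 == r).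

Section Enumeration.

Variables (r : nat) (q : nat -> nat).
Hypothesis q_enum : is_enum_primes_mod4 r q.

Lemma enum_ltn i j : 0 < i -> i < j -> q i < q j.
Proof.
case: q_enum => q_incr _ i_gt0; elim: j => // j IHj.
rewrite ltnS leq_eqVlt => /orP[/eqP <-|lt_ij]; first exact: q_incr.
by apply: ltn_trans (IHj lt_ij) (q_incr _ _); lia.
Qed.

Lemma enum_leq i j : 0 < i -> i <= j -> q i <= q j.
Proof.
by move=> i_gt0; rewrite leq_eqVlt => /orP[/eqP -> //|/(enum_ltn i_gt0)/ltnW].
Qed.

Lemma enum_prime_mod4 k : 0 < k -> prime_mod4 r (q k).
Proof. by case: q_enum => _ [q_pr _] /q_pr[pr_qk /eqP]; rewrite /prime_mod4 pr_qk. Qed.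

Lemma enum_gap (n p : nat) : (n == 0) || (q n < p) -> p < q n.+1 -> ~~ prime_mod4 r p.
Proof.
move=> n0_or_after before; apply/negP => /andP[p_pr /eqP p_mod].
case: q_enum => _ [_ q_onto]; have [k k_gt0 qk] := q_onto p p_pr p_mod.
have k_le_n : k <= n by rewrite leqNgt; apply/negP => /(enum_leq (ltn0Sn n)); lia.
have q_le := enum_leq k_gt0 k_le_n.
move: n0_or_after; case: eqP => [n0|_ /=]; lia.
Qed.

Lemma big_enum (F : nat -> nat) n :
  \sum_(1 <= i < n.+1) F (q i) = \sum_(0 <= p < q n.+1 | prime_mod4 r p) F p.
Proof.
elim: n => [|n IHn].
  rewrite big_geq // big1_seq // => p /andP[P_p]; rewrite mem_index_iota => /andP[_ p_lt].
  by move: P_p; rewrite (negPf (enum_gap (n := 0) isT p_lt)).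
have q_lt := enum_ltn (isT : 0 < n.+1) (ltnSn n.+1).
rewrite big_nat_recr //= IHn [RHS](big_cat_nat _ (n := (q n.+1).+1)) //=.
rewrite [X in _ = X + _]big_mkcond big_nat_recr //= (enum_prime_mod4 (ltn0Sn n)) -big_mkcond /=.
rewrite [X in _ = _ + X]big1_seq ?addn0 // => p.
case/andP=> P_p; rewrite mem_index_iota => /andP[after before].
by move: P_p; rewrite (negPf (enum_gap (n := n.+1) _ before)) // after orbT.
Qed.

Lemma Ssum_enum n : Ssum q n = \sum_(0 <= p < q n.+1 | prime_mod4 r p) p.
Proof. exact: (big_enum id). Qed.

Lemma enum_gt lo n : \sum_(0 <= p < lo.+1 | prime_mod4 r p) 1 <= n -> lo < q n.+1.
Proof.
rewrite ltnNge; apply: contraL => q_le_lo; rewrite -ltnNge.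
have count_enum : \sum_(0 <= p < q n.+1 | prime_mod4 r p) 1 = n.
  by rewrite -(big_enum (fun=> 1)) sum_nat_const_nat muln1 subn1.
rewrite (big_cat_nat _ (n := (q n.+1).+1)) //= big_mkcond big_nat_recr //=.
by rewrite enum_prime_mod4 // -big_mkcond count_enum; lia.
Qed.

End Enumeration.

Definition sum_smaller_primes_ge (r c lo : nat) := forall p, prime_mod4 r p -> lo < p ->
  p + c <= \sum_(0 <= p' < p | prime_mod4 r p') p'.

Lemma Ssum_ge_next r q c lo n : is_enum_primes_mod4 r q -> sum_smaller_primes_ge r c lo ->
  \sum_(0 <= p < lo.+1 | prime_mod4 r p) 1 <= n -> q n.+1 + c <= Ssum q n.
Proof.
move=> q_enum smaller_ge count_le; rewrite (Ssum_enum q_enum).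
by apply: smaller_ge; [exact: enum_prime_mod4 | exact: enum_gt count_le].
Qed.

(** * Erdős' bound on the primorial *)

Lemma dvdn_from_logn n m : 0 < n -> 0 < m ->
  (forall p, prime p -> logn p n <= logn p m) -> n %| m.
Proof.
move=> n_gt0 m_gt0 le_logn; apply/dvdn_partP => // p.
by rewrite mem_primes p_part => /andP[p_pr _]; rewrite pfactor_dvdn // le_logn.
Qed.

Lemma prod_primes_pow_gt0 a b f : 0 < \prod_(a <= p < b | prime p) p ^ f p.
Proof. by apply: prodn_cond_gt0 => p /prime_gt0 p_gt0; rewrite expn_gt0 p_gt0. Qed.

Lemma logn_prod_primes_pow q a b f : prime q ->
  logn q (\prod_(a <= p < b | prime p) p ^ f p) = (a <= q < b) * f q.
Proof.
move=> q_pr; elim: b => [|b IHb]; first by rewrite big_geq // logn1 ltn0 andbF.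
have [ab|ba] := leqP a b; last by rewrite big_geq // logn1; lia.
rewrite big_mkcond big_nat_recr //= -big_mkcond /=.
have [b_pr|b_npr] := boolP (prime b).
  rewrite lognM ?prod_primes_pow_gt0 ?expn_gt0 ?prime_gt0 // IHb lognX logn_prime //.
  by case: eqVneq => [->|/eqP]; rewrite ?ab ?ltnn ?ltnSn ?muln1 ?andbF //=; lia.
rewrite muln1 IHb; case: (eqVneq q b) => [qb|/eqP]; last lia.
by rewrite qb (negPf b_npr) in q_pr.
Qed.

Lemma mid_binomial_le k : 'C((2 * k).+1, k) <= 4 ^ k.
Proof.
have sum_row : \sum_(i < (2 * k).+2) 'C((2 * k).+1, i) = 2 ^ (2 * k).+1.
  by rewrite -[2]/(1 + 1) expnDn; apply: eq_bigr => i _; rewrite !exp1n !muln1.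
have two_terms : 'C((2 * k).+1, k) + 'C((2 * k).+1, k.+1) <= 2 ^ (2 * k).+1.
  rewrite -sum_row -(big_mkord predT (fun i => 'C((2 * k).+1, i))).
  rewrite (big_cat_nat _ (n := k)) //=; last lia.
  by rewrite (big_ltn (m := k)) 1?(big_ltn (m := k.+1)) /=; lia.
have C_sym : 'C((2 * k).+1, k.+1) = 'C((2 * k).+1, k).
  by rewrite -(bin_sub (_ : k.+1 <= (2 * k).+1)) 1?(_ : _ - _ = k) //; lia.
rewrite C_sym addnn in two_terms.
by rewrite -(leq_pmul2l (isT : 0 < 2)) mul2n (leq_trans two_terms) // expnS expnM.
Qed.

Lemma prime_dvd_fact p n : prime p -> (p %| n`!) = (p <= n).
Proof.
move=> p_pr; apply/idP/idP => [|p_le_n]; last by rewrite dvdn_fact // prime_gt0.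
elim: n => [|n IHn]; first by rewrite dvdn1 => /eqP p1; rewrite p1 in p_pr.
rewrite factS Euclid_dvdM // => /orP[/dvdn_leq|/IHn]; lia.
Qed.

Lemma mid_primes_dvd_binomial k :
  \prod_(k.+2 <= p < (2 * k).+2 | prime p) p %| 'C((2 * k).+1, k).
Proof.
have kk : k <= (2 * k).+1 by lia.
have C_fact := bin_fact kk; rewrite (_ : (2 * k).+1 - k = k.+1) in C_fact; last lia.
rewrite (eq_bigr (fun p => p ^ 1)) => [|p _]; last by rewrite expn1.
apply: dvdn_from_logn; rewrite ?prod_primes_pow_gt0 ?bin_gt0 // => q q_pr.
rewrite logn_prod_primes_pow // muln1.
case/boolP: (k.+2 <= q < (2 * k).+2) => // /andP[q_gt q_lt].
rewrite logn_gt0 mem_primes q_pr bin_gt0 kk /=.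
have : q %| ((2 * k).+1)`! by rewrite prime_dvd_fact //; lia.
rewrite -C_fact Euclid_dvdM // => /orP[//|].
by rewrite Euclid_dvdM // !prime_dvd_fact //; lia.
Qed.

Definition primorial m := \prod_(0 <= p < m.+1 | prime p) p.

Lemma primorial_le m : primorial m <= 4 ^ m.
Proof.
elim/ltn_ind: m => m IHm.
have [m_small|m_ge3] := ltnP m 3.
  by case: m m_small {IHm} => [|[|[|]]] // _; rewrite /primorial unlock.
have [m_odd|m_even] := boolP (odd m).
  have [k m_eq] : exists k, m = (2 * k).+1.
    by exists m./2; rewrite -[in LHS](odd_double_half m) m_odd -mul2n.
  rewrite /primorial m_eq (big_cat_nat _ (n := k.+2)) //=; last lia.
  apply: leq_trans (leq_mul (IHm k.+1 _) (dvdn_leq _ (mid_primes_dvd_binomial k))) _.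
  - by rewrite m_eq; lia.
  - by rewrite bin_gt0; lia.
  rewrite [in X in _ <= X](_ : (2 * k).+1 = k.+1 + k); last lia.
  by rewrite expnD leq_mul2l mid_binomial_le orbT.
have m_npr : ~~ prime m.
  by apply/negP => /even_prime[m2|m_odd']; [rewrite m2 in m_ge3 | rewrite m_odd' in m_even].
case: m m_ge3 IHm m_npr {m_even} => // m _ IHm m_npr.
rewrite /primorial big_mkcond big_nat_recr //= -big_mkcond /= (negPf m_npr) muln1.
by apply: leq_trans (IHm m _) _; rewrite ?leq_exp2l.
Qed.

(** * Chebyshev's argument modulo 4 *)

Definition odd_mod4 (r : nat) := (r == 1) || (r == 3).

Lemma odd_mod4_opp r : odd_mod4 r -> odd_mod4 (4 - r).
Proof. by case/orP => /eqP ->. Qed.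

Lemma gt0_of_mod4 r k : odd_mod4 r -> k %% 4 == r -> 0 < k.
Proof. by case: k => // /orP[] /eqP ->. Qed.

Lemma count_mod4 M b : 0 < b < 4 ->
  \sum_(0 <= m < M.+1 | m %% 4 == b) 1 = (M + 4 - b) %/ 4.
Proof.
move=> b_range; elim: M => [|M IHM].
  by rewrite big_mkcond big_nat1 mod0n; case: eqVneq => [b0|_]; lia.
by rewrite big_mkcond big_nat_recr //= -big_mkcond /= IHM; case: eqP; lia.
Qed.

Definition count_dvd_mod4 (r a b d : nat) := \sum_(a <= k < b | k %% 4 == r) (d %| k).

Lemma count_dvd_mod4_multiples r N d : 0 < d ->
  count_dvd_mod4 r 0 N.+1 d = \sum_(0 <= m < (N %/ d).+1 | (d * m) %% 4 == r) 1.
Proof.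
rewrite /count_dvd_mod4 => d_gt0; elim: N => [|N IHN].
  by rewrite div0n big_mkcond big_nat1 [RHS]big_mkcond big_nat1 muln0 dvdn0.
rewrite big_mkcond big_nat_recr //= -big_mkcond /= IHN divnS //.
have [dvd_dN|] /= := boolP (d %| N.+1); last by case: ifP; rewrite ?addn0.
rewrite add1n [RHS]big_mkcond big_nat_recr //= -big_mkcond /=.
have -> : d * (N %/ d).+1 = N.+1.
  by have := divnK dvd_dN; rewrite divnS // dvd_dN add1n mulnC.
by case: ifP.
Qed.

Lemma eq_mod4_mull_odd d m r : odd d -> odd_mod4 r ->
  ((d * m) %% 4 == r) = (m %% 4 == (r * d) %% 4).
Proof.
move=> d_odd r_odd; rewrite -modnMm -(modnMmr r d).
have : d %% 4 = 1 \/ d %% 4 = 3 by lia.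
move: (m %% 4) (ltn_pmod m (isT : 0 < 4)) => m4 m4_lt.
by case/orP: r_odd => /eqP -> [] ->; case: m4 m4_lt => [|[|[|[|]]]].
Qed.

Lemma count_dvd_mod4_prefix r N d : odd d -> odd_mod4 r ->
  count_dvd_mod4 r 0 N.+1 d = (N %/ d + 4 - (r * d) %% 4) %/ 4.
Proof.
move=> d_odd r_odd; rewrite count_dvd_mod4_multiples; last by case: d d_odd.
rewrite (eq_bigl (fun m => m %% 4 == (r * d) %% 4)) => [|m]; last exact: eq_mod4_mull_odd.
by apply: count_mod4; case/orP: r_odd => /eqP ->; lia.
Qed.

Definition excess (r y d : nat) : bool := (d %% 4 == r) && ((2 * y) %/ d %% 4 == 1).

Lemma count_dvd_mod4_upper_half r y d : odd_mod4 r -> 0 < d ->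
  count_dvd_mod4 r y.+1 (2 * y).+1 d <= count_dvd_mod4 (4 - r) 0 y.+1 d + excess r y d.
Proof.
move=> r_odd d_gt0; have [d_odd|d_even] := boolP (odd d); last first.
  rewrite /count_dvd_mod4 big1 // => k /eqP k_mod; apply/eqP; rewrite eqb0.
  apply/negP => dvd_dk; have : 2 %| k by apply: dvdn_trans dvd_dk; rewrite dvdn2.
  by rewrite dvdn2; case/orP: r_odd => /eqP r_eq; lia.
have split_range : count_dvd_mod4 r 0 (2 * y).+1 d =
    count_dvd_mod4 r 0 y.+1 d + count_dvd_mod4 r y.+1 (2 * y).+1 d.
  by rewrite /count_dvd_mod4 (big_cat_nat _ (n := y.+1)) //; lia.
move: split_range; rewrite !count_dvd_mod4_prefix ?odd_mod4_opp // /excess.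
rewrite (_ : y %/ d = (2 * y) %/ d %/ 2); last by rewrite -divnMA [d * 2]mulnC divnMl.
move: ((2 * y) %/ d) => M; have : d %% 4 = 1 \/ d %% 4 = 3 by lia.
by case/orP: r_odd => /eqP -> [] d_mod; rewrite d_mod /=; case: (M %% 4 == 1) / eqP; lia.
Qed.

Lemma logn_prod p a b (P : pred nat) : (forall k, P k -> 0 < k) ->
  logn p (\prod_(a <= k < b | P k) k) = \sum_(a <= k < b | P k) logn p k.
Proof.
move=> P_gt0; suff [] : 0 < \prod_(a <= k < b | P k) k /\
    logn p (\prod_(a <= k < b | P k) k) = \sum_(a <= k < b | P k) logn p k by [].
apply: (big_rec2 (fun m s => 0 < m /\ logn p m = s)); first by rewrite logn1.
move=> k m s P_k [m_gt0 <-]; have k_gt0 := P_gt0 k P_k.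
by rewrite muln_gt0 k_gt0 m_gt0 lognM.
Qed.

Lemma logn_count_dvd_widen p k E : prime p -> 0 < k -> k <= E ->
  logn p k = \sum_(1 <= e < E) (p ^ e %| k).
Proof.
move=> p_pr k_gt0 k_le_E; rewrite logn_count_dvd // [RHS](big_cat_nat _ (n := k)) //=.
rewrite [X in _ = _ + X]big1_seq ?addn0 // => e /andP[_].
rewrite mem_index_iota => /andP[k_le_e _]; apply/eqP; rewrite eqb0.
by apply/negP => /(dvdn_leq k_gt0); have := ltn_expl e (prime_gt1 p_pr); lia.
Qed.

Definition prod_mod4 (r a b : nat) := \prod_(a <= k < b | k %% 4 == r) k.

Lemma prod_mod4_gt0 r a b : odd_mod4 r -> 0 < prod_mod4 r a b.
Proof. by move=> r_odd; apply: prodn_cond_gt0 => k; apply: gt0_of_mod4. Qed.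

Lemma logn_prod_mod4 p r a b E : prime p -> odd_mod4 r -> b <= E ->
  logn p (prod_mod4 r a b) = \sum_(1 <= e < E) count_dvd_mod4 r a b (p ^ e).
Proof.
move=> p_pr r_odd b_le_E; rewrite /prod_mod4 logn_prod => [|k]; last exact: gt0_of_mod4.
rewrite /count_dvd_mod4 exchange_big_nat /= big_nat_cond [RHS]big_nat_cond.
apply: eq_bigr => k /andP[/andP[_ k_lt] k_mod]; apply: logn_count_dvd_widen => //; last lia.
exact: gt0_of_mod4 k_mod.
Qed.

Definition excess_exp (r y p : nat) := \sum_(1 <= e < (2 * y).+1) excess r y (p ^ e).

Definition excess_prod (r y : nat) := \prod_(0 <= p < (2 * y).+1 | prime p) p ^ excess_exp r y p.

Lemma excess_exp_large r y p : prime p -> 2 * y < p -> excess_exp r y p = 0.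
Proof.
move=> p_pr p_large; rewrite /excess_exp big1_seq // => e /andP[_].
rewrite mem_index_iota => /andP[e_gt0 _]; rewrite /excess divn_small ?andbF //.
by apply: leq_trans p_large _; rewrite -{1}(expn1 p) leq_exp2l // prime_gt1.
Qed.

Lemma prod_mod4_upper_dvd r y : odd_mod4 r ->
  prod_mod4 r y.+1 (2 * y).+1 %| prod_mod4 (4 - r) 0 y.+1 * excess_prod r y.
Proof.
move=> r_odd; apply: dvdn_from_logn => [||p p_pr].
- exact: prod_mod4_gt0.
- by rewrite muln_gt0 prod_mod4_gt0 ?odd_mod4_opp ?prod_primes_pow_gt0.
rewrite lognM ?prod_mod4_gt0 ?odd_mod4_opp ?prod_primes_pow_gt0 //.
rewrite !(logn_prod_mod4 _ (E := (2 * y).+1)) ?odd_mod4_opp //; last lia.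
rewrite logn_prod_primes_pow // (_ : (0 <= p < _) * _ = excess_exp r y p); last first.
  by case: (ltnP p (2 * y).+1) => [_|p_large]; rewrite ?mul1n // excess_exp_large.
rewrite /excess_exp -big_split /=; apply: leq_sum => e _.
by apply: count_dvd_mod4_upper_half; rewrite ?expn_gt0 ?prime_gt0.
Qed.

Lemma prod_mod4_cat r a b c : a <= b -> b <= c ->
  prod_mod4 r a c = prod_mod4 r a b * prod_mod4 r b c.
Proof. exact: big_cat_nat. Qed.

Lemma prod_mod4_block r a b : odd_mod4 r -> a %% 4 = 1 -> b = a + 4 ->
  prod_mod4 r a b = a + r - 1.
Proof.
move=> r_odd a_mod ->; rewrite /prod_mod4 big_mkcond.
do 4 (rewrite big_ltn; last lia); rewrite big_geq; last lia.
have [-> -> ->] : [/\ a.+1 %% 4 = 2, a.+2 %% 4 = 3 & a.+3 %% 4 = 0] by split; lia.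
by rewrite a_mod; case/orP: r_odd => /eqP -> /=; lia.
Qed.

Lemma prod_mod4_upper_step r t : odd_mod4 r ->
  (4 * t + r) * prod_mod4 r (4 * t.+1).+1 (8 * t.+1).+1 =
  prod_mod4 r (4 * t).+1 (8 * t).+1 * ((8 * t + r) * (8 * t + 4 + r)).
Proof.
move=> r_odd; have block := prod_mod4_block r_odd.
have -> : 4 * t + r = prod_mod4 r (4 * t).+1 (4 * t.+1).+1 by rewrite block; lia.
have -> : 8 * t + r = prod_mod4 r (8 * t).+1 (8 * t + 5) by rewrite block; lia.
have -> : 8 * t + 4 + r = prod_mod4 r (8 * t + 5) (8 * t.+1).+1 by rewrite block; lia.
by rewrite mulnA -!prod_mod4_cat //; lia.
Qed.

Lemma prod_mod4_lower_step r t : odd_mod4 r ->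
  prod_mod4 (4 - r) 0 (4 * t.+1).+1 = prod_mod4 (4 - r) 0 (4 * t).+1 * (4 * t + 4 - r).
Proof.
move=> r_odd; have block := prod_mod4_block (odd_mod4_opp r_odd).
rewrite (@prod_mod4_cat _ 0 (4 * t).+1) //; last lia.
rewrite [X in _ * X = _]block; try lia.
by congr (_ * _); case/orP: r_odd => /eqP ->; lia.
Qed.

Lemma prod_mod4_ratio_bound r t : odd_mod4 r ->
  4 ^ t * prod_mod4 (4 - r) 0 (4 * t).+1 <= (2 * t + 1) * prod_mod4 r (4 * t).+1 (8 * t).+1.
Proof.
move=> r_odd; elim: t => [|t IHt].
  rewrite /prod_mod4 !muln0 [X in _ <= _ * X]big_geq // big_mkcond big_nat1 mod0n.
  by case/orP: r_odd => /eqP ->.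
have pos : 0 < 4 * t + r by case/orP: r_odd => /eqP ->; lia.
have poly : 4 * (2 * t + 1) * ((4 * t + 4 - r) * (4 * t + r)) <=
    (2 * t + 3) * ((8 * t + r) * (8 * t + 4 + r)).
  by case/orP: r_odd => /eqP ->; nia.
rewrite -(leq_pmul2r pos) prod_mod4_lower_step // expnS.
set L := prod_mod4 (4 - r) _ _; pose U := prod_mod4 r (4 * t).+1 (8 * t).+1.
apply: (@leq_trans ((2 * t + 1) * U * (4 * ((4 * t + 4 - r) * (4 * t + r))))).
  rewrite (_ : _ * _ * _ = 4 ^ t * L * (4 * ((4 * t + 4 - r) * (4 * t + r)))); last by ring.
  exact: leq_mul IHt (leqnn _).
apply: (@leq_trans (U * ((2 * t + 3) * ((8 * t + r) * (8 * t + 4 + r))))).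
  rewrite (_ : _ * _ * _ = U * (4 * (2 * t + 1) * ((4 * t + 4 - r) * (4 * t + r)))); last by ring.
  by rewrite leq_mul2l poly orbT.
rewrite mulnCA /U -prod_mod4_upper_step // (_ : 2 * t.+1 + 1 = 2 * t + 3); last lia.
by apply: eq_leq; ring.
Qed.

Lemma leq_prod_subpred a b (P Q : pred nat) (F : nat -> nat) :
  (forall i, P i -> Q i) -> (forall i, Q i -> 0 < F i) ->
  \prod_(a <= i < b | P i) F i <= \prod_(a <= i < b | Q i) F i.
Proof.
move=> PQ Q_gt0; rewrite big_mkcond [leqRHS]big_mkcond; apply: leq_prod => i _.
by have [/PQ -> //|_] := boolP (P i); case: ifP => // /Q_gt0.
Qed.

Lemma sum_bool_bounded a b s (P : pred nat) : (forall i, P i -> i < s) ->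
  \sum_(a <= i < b) P i <= s - a.
Proof.
move=> P_lt; suff : \sum_(a <= i < b) P i <= minn (b - a) (s - a) by lia.
elim: b => [|b IHb]; first by rewrite big_geq.
have [a_le_b|b_lt_a] := leqP a b; last by rewrite big_geq //; lia.
by rewrite big_nat_recr //=; case: (boolP (P b)) => [/P_lt|_]; lia.
Qed.

Lemma prod_nat_const_cond a b (P : pred nat) c :
  \prod_(a <= i < b | P i) c = c ^ (\sum_(a <= i < b | P i) 1).
Proof.
apply: (big_rec2 (fun m k => m = c ^ k)); first by rewrite expn0.
by move=> i m k _ ->; rewrite expnS.
Qed.

Lemma excess_exp_le_trunc_log r y p : prime p -> excess_exp r y p <= trunc_log p (2 * y).
Proof.
move=> p_pr; have := @sum_bool_bounded 1 (2 * y).+1 (trunc_log p (2 * y)).+1.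
rewrite subn1; apply => e /andP[_ quot_mod].
rewrite ltnS; apply: trunc_log_max; first exact: prime_gt1.
rewrite -divn_gt0; last by rewrite expn_gt0 prime_gt0.
by case: (_ %/ _) quot_mod.
Qed.

Lemma excess_exp_le_mod4 r y p : prime p -> 2 * y < p * p -> excess_exp r y p <= (p %% 4 == r).
Proof.
move=> p_pr; case: y => [|y] small; first by rewrite /excess_exp big_geq.
rewrite /excess_exp big_ltn // big1_seq ?addn0 => [|e].
  by rewrite expn1 /excess; case: (p %% 4 == r); rewrite /= ?leq_b1.
case/andP=> _; rewrite mem_index_iota => /andP[e_ge2 _]; rewrite /excess divn_small ?andbF //.
by apply: leq_trans small _; rewrite mulnn leq_exp2l // prime_gt1.
Qed.

Definition prod_primes_mod4 r a b := \prod_(a.+1 <= p < b.+1 | prime_mod4 r p) p.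

Lemma excess_prod_le r y s low : 0 < y -> low <= 2 * y ->
  (forall p, p * p <= 2 * y -> p < s) ->
  excess_prod r y <= (2 * y) ^ s * (primorial low * prod_primes_mod4 r low (2 * y)).
Proof.
move=> y_gt0 low_le sqrt_lt; rewrite /excess_prod (bigID (fun p => p * p <= 2 * y)) /=.
apply: leq_mul.
  apply: (@leq_trans (\prod_(0 <= p < (2 * y).+1 | prime p && (p * p <= 2 * y)) (2 * y))).
    apply: leq_prod => p /andP[p_pr _].
    apply: leq_trans (leq_pexp2l (prime_gt0 p_pr) (excess_exp_le_trunc_log r y p_pr)) _.
    by apply: trunc_logP; [exact: prime_gt1 | lia].
  rewrite prod_nat_const_cond leq_pexp2l ?muln_gt0 // big_mkcond -(subn0 s).
  by apply: sum_bool_bounded => p /andP[_ /sqrt_lt].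
apply: (@leq_trans (\prod_(0 <= p < (2 * y).+1 | prime p && ~~ (p * p <= 2 * y))
                      (if p %% 4 == r then p else 1))).
  apply: leq_prod => p /andP[p_pr large].
  apply: leq_trans (leq_pexp2l (prime_gt0 p_pr) (excess_exp_le_mod4 r p_pr _)) _; first lia.
  by case: (p %% 4 == r); rewrite ?expn1 ?expn0.
apply: (@leq_trans (\prod_(0 <= p < (2 * y).+1 | prime p) (if p %% 4 == r then p else 1))).
  by apply: leq_prod_subpred => [p /andP[]|p /prime_gt0] //; case: ifP.
rewrite -big_mkcondr /= (big_cat_nat _ (n := low.+1)) //=.
apply: leq_mul; last exact: leqnn.
by apply: leq_prod_subpred => [p /andP[] | p /prime_gt0].
Qed.

Lemma exp4_le_excess_prod r t : odd_mod4 r -> 4 ^ t <= (2 * t + 1) * excess_prod r (4 * t).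
Proof.
move=> r_odd; have L_gt0 := prod_mod4_gt0 0 (4 * t).+1 (odd_mod4_opp r_odd).
rewrite -(leq_pmul2r L_gt0); apply: leq_trans (prod_mod4_ratio_bound t r_odd) _.
rewrite -mulnA leq_mul2l [_ * prod_mod4 _ _ _]mulnC dvdn_leq ?orbT //.
  by rewrite muln_gt0 L_gt0 prod_primes_pow_gt0.
by rewrite (_ : 8 * t = 2 * (4 * t)); [exact: prod_mod4_upper_dvd | lia].
Qed.

Definition isqrt_ub N := 2 ^ (trunc_log 2 N %/ 2).+1.

Lemma isqrt_ub_gt p N : p * p <= N -> p < isqrt_ub N.
Proof.
move=> p2_le; rewrite ltnNge; apply/negP => ub_le_p.
have := trunc_log_ltn N (isT : 1 < 2).
have : 2 ^ (trunc_log 2 N).+1 <= isqrt_ub N * isqrt_ub N by rewrite -expnD leq_exp2l //; lia.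
have := leq_mul ub_le_p ub_le_p; lia.
Qed.

Lemma exp2_dominates k : 14 <= k ->
  k + 2 + (k + 4) * (2 ^ ((k + 3) %/ 2).+1 + 256) <= 2 ^ k.
Proof.
elim/ltn_ind: k => k IHk k_ge14.
have [k_small|k_ge16] := ltnP k 16.
  by have [->|->] : k = 14 \/ k = 15 by lia.
have [j k_eq] : exists j, k = j.+2 by exists (k - 2); lia.
have := IHk j _ _; rewrite k_eq; try lia.
rewrite (_ : (j.+2 + 3) %/ 2 = ((j + 3) %/ 2).+1); last lia.
by rewrite !expnS; move: (2 ^ ((j + 3) %/ 2)) (2 ^ j) => a b; nia.
Qed.

Lemma poly_lt_exp2 z : 2 ^ 14 <= z -> (2 * z + 1) * (8 * z) ^ (isqrt_ub (8 * z) + 256) < 2 ^ z.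
Proof.
move=> z_large; set k := trunc_log 2 z.
have z_gt0 : 0 < z by apply: leq_trans z_large; rewrite expn_gt0.
have lo : 2 ^ k <= z by apply: trunc_logP.
have hi : z < 2 * 2 ^ k by rewrite -expnS; apply: trunc_log_ltn.
have k_ge14 : 14 <= k by apply: trunc_log_max.
have log8 : trunc_log 2 (8 * z) = k + 3.
  by apply: trunc_log_eq => //; rewrite -addnS !expnD; move: lo hi; move: (2 ^ k) => K; lia.
rewrite /isqrt_ub log8; set E := _ + 256.
have first_factor : 2 * z + 1 <= 2 ^ (k + 2) by rewrite expnD; move: lo hi; move: (2 ^ k) => K; lia.
have second_factor : (8 * z) ^ E < 2 ^ ((k + 4) * E).
  rewrite mulnC expnM ltn_exp2r ?addn_gt0 ?orbT // expnD.
  by move: lo hi; move: (2 ^ k) => K; lia.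
apply: leq_trans (_ : 2 ^ (k + 2) * 2 ^ ((k + 4) * E) <= 2 ^ z).
  by apply: leq_trans _ (leq_mul first_factor second_factor); rewrite mulnS; lia.
rewrite -expnD leq_exp2l //; apply: leq_trans (exp2_dominates k_ge14) lo.
Qed.

Lemma exp4_half_mul_exp2 t : 4 ^ (t %/ 2) * 2 ^ t <= 4 ^ t.
Proof. by rewrite -[4]/(2 ^ 2) -!expnM -expnD leq_exp2l //; lia. Qed.

Lemma prod_primes_mod4_large r t : odd_mod4 r -> 2 ^ 14 <= t ->
  (8 * t) ^ 256 < prod_primes_mod4 r (t %/ 2) (8 * t).
Proof.
move=> r_odd t_large; rewrite ltnNge; apply/negP => W_small.
set s := isqrt_ub (8 * t).
have excess_le : excess_prod r (4 * t) <=
    (8 * t) ^ s * (primorial (t %/ 2) * prod_primes_mod4 r (t %/ 2) (8 * t)).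
  rewrite /s (_ : 8 * t = 2 * (4 * t)); last by rewrite mulnA.
  apply: excess_prod_le => [||p].
  - by rewrite muln_gt0 (leq_trans _ t_large).
  - by rewrite (leq_trans (leq_div t 2)) // mulnA leq_pmull.
  exact: isqrt_ub_gt.
have upper : 4 ^ t <= 4 ^ (t %/ 2) * ((2 * t + 1) * (8 * t) ^ (s + 256)).
  apply: leq_trans (exp4_le_excess_prod t r_odd) _; rewrite mulnCA.
  apply: leq_mul => //; rewrite expnD mulnCA; apply: leq_trans excess_le _.
  by apply: leq_mul => //; apply: leq_mul; [exact: primorial_le | exact: W_small].
have := leq_trans (exp4_half_mul_exp2 t) upper.
by rewrite leq_pmul2l ?expn_gt0 // leqNgt poly_lt_exp2.
Qed.

Lemma sum_smaller_primes_large r p : odd_mod4 r -> 2 ^ 17 < p ->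
  p + 244 <= \sum_(0 <= p' < p | prime_mod4 r p') p'.
Proof.
move=> r_odd p_large; set t := p.-1 %/ 8.
have t_large : 2 ^ 14 <= t by rewrite /t; lia.
set m := \sum_((t %/ 2).+1 <= p' < (8 * t).+1 | prime_mod4 r p') 1.
have m_large : 256 < m.
  rewrite -(ltn_exp2l _ _ (_ : 1 < 8 * t)); last lia.
  apply: leq_trans (prod_primes_mod4_large r_odd t_large) _.
  rewrite /m /prod_primes_mod4 -prod_nat_const_cond big_nat_cond [leqRHS]big_nat_cond.
  by apply: leq_prod => p' /andP[/andP[_ p'_le] _]; rewrite -ltnS.
have sum_ge : m * (t %/ 2).+1 <= \sum_((t %/ 2).+1 <= p' < (8 * t).+1 | prime_mod4 r p') p'.
  rewrite /m big_distrl /= big_nat_cond [leqRHS]big_nat_cond.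
  by apply: leq_sum => p' /andP[/andP[p'_gt _] _]; rewrite mul1n.
have sub_range : \sum_((t %/ 2).+1 <= p' < (8 * t).+1 | prime_mod4 r p') p' <=
    \sum_(0 <= p' < p | prime_mod4 r p') p'.
  rewrite [leqRHS](big_cat_nat _ (n := (t %/ 2).+1)) //=; last lia.
  by rewrite [X in _ <= _ + X](big_cat_nat _ (n := (8 * t).+1)) /=; lia.
have : 257 * (t %/ 2).+1 <= m * (t %/ 2).+1 by rewrite leq_mul2r m_large orbT.
lia.
Qed.

(** * Certified computation below 2^17 *)

Lemma N_ltb_of_nat m n : N.ltb (N.of_nat m) (N.of_nat n) = (m < n).
Proof. by apply/N.ltb_spec0/idP => [|/ltP]; [move=> ?; apply/ltP|]; lia. Qed.

Lemma N_leb_of_nat m n : N.leb (N.of_nat m) (N.of_nat n) = (m <= n).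
Proof. by apply/N.leb_spec0/idP => [|/leP]; [move=> ?; apply/leP|]; lia. Qed.

Lemma N_eqb_of_nat m n : N.eqb (N.of_nat m) (N.of_nat n) = (m == n).
Proof. by apply/N.eqb_spec/eqP; lia. Qed.

Lemma N_mod_of_nat m d : 0 < d -> N.modulo (N.of_nat m) (N.of_nat d) = N.of_nat (m %% d).
Proof.
move=> d_gt0; symmetry; apply: (N.mod_unique _ _ (N.of_nat (m %/ d))).
  by have := ltn_pmod m d_gt0; lia.
by have := divn_eq m d; lia.
Qed.

(** The tests below are written with [if] rather than [&&]/[||]: the VM evaluates
    arguments eagerly, so [b || rec] would run every trial division to the end. *)
Fixpoint no_divisor_from (fuel : nat) (n d : N) : bool :=
  if N.ltb n (N.mul d d) then true
  else if N.eqb (N.modulo n d) 0 then false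
  else if fuel is f.+1 then no_divisor_from f n (N.succ d) else false.

Lemma no_divisor_fromP f n d : 0 < d -> n < (d + f) * (d + f) ->
  reflect (forall e, d <= e -> e * e <= n -> ~~ (e %| n))
          (no_divisor_from f (N.of_nat n) (N.of_nat d)).
Proof.
elim: f d => [|f IHf] d d_gt0 n_lt /=.
  rewrite addn0 in n_lt; rewrite -Nat2N.inj_mul N_ltb_of_nat n_lt.
  by left => e de /(leq_trans (leq_mul de de)); lia.
rewrite -Nat2N.inj_mul N_ltb_of_nat N_mod_of_nat // -[0%num]/(N.of_nat 0) N_eqb_of_nat -/(d %| n).
have [n_small|d2_le] := ltnP n (d * d).
  by left => e de /(leq_trans (leq_mul de de)); lia.
have [d_dvd|d_ndvd] /= := boolP (d %| n); first by right => /(_ d (leqnn d) d2_le); rewrite d_dvd.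
have n_lt' : n < (d.+1 + f) * (d.+1 + f) by rewrite addSnnS.
rewrite -Nat2N.inj_succ; apply: (iffP (IHf d.+1 (ltn0Sn d) n_lt')) => [no_div e|no_div e de].
  by rewrite leq_eqVlt => /orP[/eqP <- //|]; apply: no_div.
by apply: no_div; lia.
Qed.

Definition prime_test (n : N) : bool := if N.ltb 1 n then no_divisor_from 400 n 2 else false.

Lemma prime_testP n : n < 402 * 402 -> prime_test (N.of_nat n) = prime n.
Proof.
move=> n_lt; rewrite /prime_test -[1%num]/(N.of_nat 1) N_ltb_of_nat.
have [n_gt1|] /= := ltnP 1 n; last by case: n {n_lt} => [|[]].
rewrite -[2%num]/(N.of_nat 2).
apply/(no_divisor_fromP (isT : 0 < 2) n_lt)/idP => [no_div|n_pr e e_ge2 e2_le].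
  apply: contraT => /primePns[|[p [p_pr p2_le p_dvd]]]; first lia.
  by move: (no_div p (prime_gt1 p_pr)); rewrite mulnn p2_le p_dvd => /(_ isT).
case/primeP: n_pr => _ n_div; apply/negP => /n_div /pred2P[e1|en]; first lia.
by rewrite en in e2_le; nia.
Qed.

(** [s] is the sum of the primes [= r (mod 4)] below [k]; the scan fails at the first such
    prime [k > lo] with [k + c > s]. *)
Fixpoint gap_scan (r c lo : N) (fuel : nat) (k s : N) : bool :=
  if fuel is f.+1 then
    let candidate := if N.eqb (N.modulo k 4) r then prime_test k else false in
    if candidate && N.ltb lo k && ~~ N.leb (N.add k c) s then false
    else gap_scan r c lo f (N.succ k) (if candidate then N.add s k else s)
  else true.

Lemma candidate_of_nat r k : k < 402 * 402 ->
  (if N.eqb (N.modulo (N.of_nat k) 4) (N.of_nat r) then prime_test (N.of_nat k) else false) =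
  prime_mod4 r k.
Proof.
move=> k_lt; rewrite -[4%num]/(N.of_nat 4) N_mod_of_nat // N_eqb_of_nat prime_testP //.
by rewrite /prime_mod4 andbC; case: eqP.
Qed.

Lemma gap_scanP r c lo f k s : k + f <= 402 * 402 ->
  gap_scan (N.of_nat r) (N.of_nat c) (N.of_nat lo) f (N.of_nat k) (N.of_nat s) ->
  forall p, k <= p < k + f -> prime_mod4 r p -> lo < p ->
  p + c <= s + \sum_(k <= p' < p | prime_mod4 r p') p'.
Proof.
elim: f k s => [|f IHf] k s bound; first by move=> _ p; lia.
rewrite /= candidate_of_nat; last lia.
rewrite -Nat2N.inj_add plusE N_leb_of_nat N_ltb_of_nat -Nat2N.inj_succ.
rewrite (_ : (if _ then _ else _) = N.of_nat (s + (if prime_mod4 r k then k else 0))); last first.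
  by case: (prime_mod4 r k); rewrite ?addn0 ?Nat2N.inj_add.
case: ifP => // /negbT k_ok /IHf scan_ok p /andP[k_le p_lt] P_p lo_lt.
have [k_eq|k_neq] := eqVneq k p.
  by subst p; rewrite big_geq // addn0; move: k_ok; rewrite P_p lo_lt negbK.
rewrite big_ltn_cond /=; last lia.
apply: leq_trans (scan_ok _ p _ P_p lo_lt) _; try lia.
by case: (prime_mod4 r k); lia.
Qed.

Lemma sum_smaller_primes_ge_of_scan r c lo : odd_mod4 r -> c <= 244 ->
  gap_scan (N.of_nat r) (N.of_nat c) (N.of_nat lo) (2 ^ 17).+1 (N.of_nat 0) (N.of_nat 0) ->
  sum_smaller_primes_ge r c lo.
Proof.
move=> r_odd c_le scan p P_p lo_lt; have [p_small|p_large] := leqP p (2 ^ 17).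
  have range : 0 <= p < 0 + (2 ^ 17).+1 by rewrite add0n ltnS.
  by have := gap_scanP (isT : 0 + (2 ^ 17).+1 <= 402 * 402) scan range P_p lo_lt; rewrite add0n.
by have := sum_smaller_primes_large r_odd p_large; lia.
Qed.

Local Open Scope ring_scope.

Theorem lemma2p4 :
  (forall q : nat -> nat, is_enum_primes_mod4 1 q ->
     forall n : nat, (10 <= n)%N ->
       (Ssum q n)%:Z - (q n.+1)%:Z >= 244)
  /\
  (forall q : nat -> nat, is_enum_primes_mod4 3 q ->
     forall n : nat, (8 <= n)%N ->
       (Ssum q n)%:Z - (q n.+1)%:Z >= 112).
Proof.
have gap1 : sum_smaller_primes_ge 1 244 89.
  by apply: sum_smaller_primes_ge_of_scan; last vm_compute.
have gap3 : sum_smaller_primes_ge 3 112 47.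
  by apply: sum_smaller_primes_ge_of_scan; last vm_compute.
have count1 : (\sum_(0 <= p < 90 | prime_mod4 1 p) 1 <= 10)%N by rewrite unlock.
have count3 : (\sum_(0 <= p < 48 | prime_mod4 3 p) 1 <= 8)%N by rewrite unlock.
split=> q q_enum n n_ge.
  by have := Ssum_ge_next q_enum gap1 (leq_trans count1 n_ge); lia.
by have := Ssum_ge_next q_enum gap3 (leq_trans count3 n_ge); lia.
Qed.
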